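(* Let $\Omega\subset\mathbb{R}^2$ be open, $\lambda>0$, and let $u\in L^2(\Omega)$ satisfy $-\Delta u=\lambda u$ in $\Omega$. Let $\mathbf{x}_0\in\Omega$, $h>0$, $\alpha\in(0,1)$, and let $\mathbf{e}^-,\mathbf{e}^+$ be unit vectors such that the angle from $\mathbf{e}^-$ to $\mathbf{e}^+$ is $\alpha\pi$; put $\Gamma^\pm=\{\mathbf{x}_0+t\mathbf{e}^\pm:0\le t\le h\}\subset\Omega$. Suppose $\Gamma^-$ and $\Gamma^+$ are generalized singular lines of $u$ with constant parameters $\eta_1\equiv C_1$ on $\Gamma^-$ and $\eta_2\equiv C_2$ on $\Gamma^+$. Let $n\in\mathbb{N}$, $n\ge3$. If $u(\mathbf{x}_0)=0$ and $\alpha\neq q/p$ for all integers $1\le q<p\le n-1$, then $u$ vanishes up to the order $n$ at $\mathbf{x}_0$, i.e. all partial derivatives of $u$ of order at most $n-1$ vanish at $\mathbf{x}_0$.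
   Context: No boundary condition is imposed on $\partial\Omega$; $u$ is real-analytic in $\Omega$. A line segment $\Gamma\subset\Omega$ is a generalized singular line of $u$ with parameter $\eta$ (a complex-valued function on $\Gamma$ not identically zero; here a nonzero complex constant) if $\partial_\nu u+\eta u=0$ on $\Gamma$, $\nu$ a unit normal vector to $\Gamma$. ''Vanishes up to order $n$ at $\mathbf{x}_0$'' means every homogeneous term of degree $<n$ in the Taylor expansion of $u$ at $\mathbf{x}_0$ is zero. *)

From Stdlib Require Import Reals List.
From Coquelicot Require Import Coquelicot.
Open Scope R_scope.

Definition dx (f : R * R -> R) : R * R -> R :=
  fun p => Derive (fun t => f (t, snd p)) (fst p).
Definition dy (f : R * R -> R) : R * R -> R :=
  fun p => Derive (fun t => f (fst p, t)) (snd p).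

(* Iterated partial derivative along a word of directions
   (true = d/dx, false = d/dy); the head of the list is applied last. *)
Fixpoint pdw (w : list bool) (f : R * R -> R) : R * R -> R :=
  match w with
  | nil => f
  | b :: w' => (if b then dx else dy) (pdw w' f)
  end.

Definition smooth_on (O : R * R -> Prop) (f : R * R -> R) : Prop :=
  forall (w : list bool) (p : R * R), O p ->
    continuous (pdw w f) p /\
    ex_derive (fun t => pdw w f (t, snd p)) (fst p) /\
    ex_derive (fun t => pdw w f (fst p, t)) (snd p).

Definition ReF (u : R * R -> C) : R * R -> R := fun p => Re (u p).
Definition ImF (u : R * R -> C) : R * R -> R := fun p => Im (u p).

Definition lap (f : R * R -> R) : R * R -> R :=
  fun p => dx (dx f) p + dy (dy f) p.

Definition helmholtz (O : R * R -> Prop) (lam : R) (u : R * R -> C) : Prop :=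
  forall p, O p ->
    - lap (ReF u) p = lam * ReF u p /\ - lap (ImF u) p = lam * ImF u p.

Definition seg_pt (x0 e : R * R) (t : R) : R * R :=
  (fst x0 + t * fst e, snd x0 + t * snd e).

Definition dnu (nu : R * R) (u : R * R -> C) (p : R * R) : C :=
  (fst nu * dx (ReF u) p + snd nu * dy (ReF u) p,
   fst nu * dx (ImF u) p + snd nu * dy (ImF u) p).

Definition gen_singular_line (u : R * R -> C) (x0 e : R * R) (h : R)
    (eta : C) : Prop :=
  eta <> RtoC 0 /\
  exists nu : R * R,
    fst nu ^ 2 + snd nu ^ 2 = 1 /\ fst nu * fst e + snd nu * snd e = 0 /\
    forall t, 0 <= t <= h ->
      Cplus (dnu nu u (seg_pt x0 e t)) (Cmult eta (u (seg_pt x0 e t)))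
        = RtoC 0.

(* If all derivatives of u of order < N vanish at x0,
   differentiating -Delta u = lambda u shows that the order-N part of the Taylor
   expansion of Re u (and of Im u) is harmonic, hence of the form Re (B z^N) with
   z = x + i y. Differentiating the boundary condition d_nu u + eta u = 0 N - 1 times
   along a segment of direction e leaves only the top-order term, d_e^(N-1) d_nu,
   which amounts to Im (B e^N) = 0. For the two directions e^- and
   e^+ = e^(i alpha pi) e^- this gives Im z = 0 and Im (z e^(i N alpha pi)) = 0 for
   z = B (e^-)^N, so z = 0 because sin (N alpha pi) <> 0 when alpha is not of the
   form q/N; hence B = 0. *)

From Stdlib Require Import Reals ZArith List Permutation Lra Lia.
From Coquelicot Require Import Coquelicot.
Import ListNotations.
Open Scope R_scope.

Local Notation xdeg w := (count_occ Bool.bool_dec w true).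
Local Notation ydeg w := (count_occ Bool.bool_dec w false).

Lemma open_locally_fst (O : R * R -> Prop) p : open O -> O p ->
  locally (fst p) (fun t => O (t, snd p)).
Proof.
  intros HO Hp. destruct (HO p Hp) as [eps He].
  exists eps. intros t Ht. apply He. split; [exact Ht | apply ball_center].
Qed.

Lemma open_locally_snd (O : R * R -> Prop) p : open O -> O p ->
  locally (snd p) (fun t => O (fst p, t)).
Proof.
  intros HO Hp. destruct (HO p Hp) as [eps He].
  exists eps. intros t Ht. apply He. split; [apply ball_center | exact Ht].
Qed.

Lemma open_locally_2d (O : R * R -> Prop) p : open O -> O p ->
  locally_2d (fun u v => O (u, v)) (fst p) (snd p).
Proof.
  intros HO Hp. destruct (HO p Hp) as [eps He].
  exists eps. intros u v Hu Hv. apply He. split; assumption.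
Qed.

Lemma pdw_app w1 w2 f : pdw (w1 ++ w2) f = pdw w1 (pdw w2 f).
Proof. induction w1 as [|b w1 IH]; simpl; [reflexivity | now rewrite IH]. Qed.

Lemma smooth_on_pdw O f w : smooth_on O f -> smooth_on O (pdw w f).
Proof. intros Hf v p Hp. rewrite <- pdw_app. now apply Hf. Qed.

Lemma pdw_ext_open O F G : open O -> (forall q, O q -> F q = G q) ->
  forall w p, O p -> pdw w F p = pdw w G p.
Proof.
  intros HO HFG w. induction w as [|[] w IH]; intros p Hp; simpl.
  - now apply HFG.
  - apply Derive_ext_loc.
    apply (filter_imp _ _ (fun t Ht => IH _ Ht)), open_locally_fst; assumption.
  - apply Derive_ext_loc.
    apply (filter_imp _ _ (fun t Ht => IH _ Ht)), open_locally_snd; assumption.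
Qed.

Lemma pdw_scal c F w p : pdw w (fun q => c * F q) p = c * pdw w F p.
Proof.
  revert p. induction w as [|[] w IH]; intros p; simpl; unfold dx, dy;
    [reflexivity | |]; rewrite <- Derive_scal; apply Derive_ext; intros t; apply IH.
Qed.

Lemma pdw_plus O F G : open O -> smooth_on O F -> smooth_on O G ->
  forall w p, O p -> pdw w (fun q => F q + G q) p = pdw w F p + pdw w G p.
Proof.
  intros HO HF HG w. induction w as [|[] w IH]; intros p Hp; simpl; [reflexivity | |].
  - destruct (HF w p Hp) as (_ & HFx & _), (HG w p Hp) as (_ & HGx & _).
    unfold dx, dy. rewrite <- Derive_plus by assumption. apply Derive_ext_loc.
    apply (filter_imp _ _ (fun t Ht => IH _ Ht)), open_locally_fst; assumption.
  - destruct (HF w p Hp) as (_ & _ & HFy), (HG w p Hp) as (_ & _ & HGy).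
    unfold dx, dy. rewrite <- Derive_plus by assumption. apply Derive_ext_loc.
    apply (filter_imp _ _ (fun t Ht => IH _ Ht)), open_locally_snd; assumption.
Qed.

Lemma smooth_on_scal O c F : smooth_on O F -> smooth_on O (fun q => c * F q).
Proof.
  intros HF w p Hp. destruct (HF w p Hp) as (Hc & Hx & Hy).
  assert (E : forall q, c * pdw w F q = pdw w (fun q => c * F q) q)
    by (intros q; now rewrite pdw_scal).
  split; [|split].
  - apply (continuous_ext (fun q => c * pdw w F q)); [exact E|].
    exact (continuous_scal_r (K := R_AbsRing) (V := R_NormedModule) c _ _ Hc).
  - apply (ex_derive_ext (fun t => c * pdw w F (t, snd p))); [intros; apply E|].
    now apply ex_derive_scal.
  - apply (ex_derive_ext (fun t => c * pdw w F (fst p, t))); [intros; apply E|].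
    now apply ex_derive_scal.
Qed.

Lemma smooth_on_plus O F G : open O -> smooth_on O F -> smooth_on O G ->
  smooth_on O (fun q => F q + G q).
Proof.
  intros HO HF HG w p Hp.
  destruct (HF w p Hp) as (HFc & HFx & HFy), (HG w p Hp) as (HGc & HGx & HGy).
  assert (E : forall q, O q -> pdw w F q + pdw w G q = pdw w (fun q => F q + G q) q)
    by (intros q Hq; symmetry; now apply (pdw_plus O)).
  split; [|split].
  - apply (continuous_ext_loc _ (fun q => pdw w F q + pdw w G q)).
    + exact (filter_imp _ _ E (HO p Hp)).
    + exact (continuous_plus (K := R_AbsRing) (V := R_NormedModule) _ _ _ HFc HGc).
  - apply (ex_derive_ext_loc (fun t => pdw w F (t, snd p) + pdw w G (t, snd p))).
    + apply (filter_imp _ _ (fun t Ht => E _ Ht)), open_locally_fst; assumption.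
    + exact (ex_derive_plus (K := R_AbsRing) (V := R_NormedModule) _ _ _ HFx HGx).
  - apply (ex_derive_ext_loc (fun t => pdw w F (fst p, t) + pdw w G (fst p, t))).
    + apply (filter_imp _ _ (fun t Ht => E _ Ht)), open_locally_snd; assumption.
    + exact (ex_derive_plus (K := R_AbsRing) (V := R_NormedModule) _ _ _ HFy HGy).
Qed.

Lemma continuity_2d_pt_smooth O f p : smooth_on O f -> O p ->
  continuity_2d_pt (fun u v => f (u, v)) (fst p) (snd p).
Proof.
  intros Hf Hp. apply continuity_2d_pt_filterlim.
  destruct (Hf nil p Hp) as [Hc _]. destruct p as [p1 p2].
  eapply filterlim_ext; [|exact Hc]. now intros [a b].
Qed.

Lemma dx_dy_comm O f p : open O -> smooth_on O f -> O p ->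
  dx (dy f) p = dy (dx f) p.
Proof.
  intros HO Hf Hp. destruct p as [p1 p2]. unfold dx, dy; simpl.
  apply (Schwarz (fun u v => f (u, v)) p1 p2).
  - destruct (open_locally_2d O (p1, p2) HO Hp) as [d Hd].
    exists d. intros u v Hu Hv. specialize (Hd u v Hu Hv).
    destruct (Hf nil (u, v) Hd) as (_ & Hx & Hy).
    destruct (Hf [false] (u, v) Hd) as (_ & Hyx & _).
    destruct (Hf [true] (u, v) Hd) as (_ & _ & Hxy).
    repeat split; assumption.
  - exact (continuity_2d_pt_smooth O (pdw [true; false] f) (p1, p2)
             (smooth_on_pdw O f _ Hf) Hp).
  - exact (continuity_2d_pt_smooth O (pdw [false; true] f) (p1, p2)
             (smooth_on_pdw O f _ Hf) Hp).
Qed.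

Lemma pdw_Permutation O f w w' : open O -> smooth_on O f -> Permutation w w' ->
  forall p, O p -> pdw w f p = pdw w' f p.
Proof.
  intros HO Hf Hww'. induction Hww' as [| b w w' _ IH | b b' w | w w' w'' _ IH _ IH'];
    intros p Hp.
  - reflexivity.
  - exact (pdw_ext_open O _ _ HO IH [b] p Hp).
  - destruct b, b'; simpl; try reflexivity;
      [symmetry |]; apply (dx_dy_comm O); auto using smooth_on_pdw.
  - now rewrite IH, IH'.
Qed.

Lemma Permutation_sort_bool (w : list bool) :
  Permutation w (repeat true (xdeg w) ++ repeat false (ydeg w)).
Proof.
  induction w as [|[] w IH]; simpl.
  - constructor.
  - now constructor.
  - now apply Permutation_cons_app.
Qed.

Lemma derivable_pt_lim_linear_bound f y l (eps : posreal) : derivable_pt_lim f y l ->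
  exists d : posreal, forall v, Rabs (v - y) < d ->
    Rabs (f v - f y - l * (v - y)) <= eps * Rabs (v - y).
Proof.
  intros Hf. destruct (Hf eps (cond_pos eps)) as [d Hd]. exists d. intros v Hv.
  destruct (Req_dec v y) as [->|Hvy].
  - replace (f y - f y - l * (y - y)) with 0 by ring.
    rewrite Rminus_diag, Rabs_R0. lra.
  - specialize (Hd (v - y) ltac:(lra) Hv). replace (y + (v - y)) with v in Hd by ring.
    replace (f v - f y - l * (v - y)) with (((f v - f y) / (v - y) - l) * (v - y))
      by (field; lra).
    rewrite Rabs_mult. apply Rmult_le_compat_r; [apply Rabs_pos | lra].
Qed.

Lemma MVT_partial_fst (F : R -> R -> R) x u v :
  (forall z, Rabs (z - x) <= Rabs (u - x) -> ex_derive (fun t => F t v) z) ->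
  exists c, Rabs (c - x) <= Rabs (u - x) /\
    F u v - F x v = Derive (fun t => F t v) c * (u - x).
Proof.
  intros HF.
  assert (Hin : forall z, Rmin x u <= z <= Rmax x u -> Rabs (z - x) <= Rabs (u - x))
    by (intros z Hz; apply Rabs_le_between_min_max; now rewrite Rmin_comm, Rmax_comm).
  destruct (MVT_gen (fun t => F t v) x u (Derive (fun t => F t v))) as (c & Hc & E).
  - intros z Hz. apply Derive_correct, HF, Hin. lra.
  - intros z Hz. apply continuity_pt_filterlim.
    apply (ex_derive_continuous (K := R_AbsRing) (V := R_NormedModule) (fun t => F t v)).
    apply HF, Hin, Hz.
  - exists c. split; [apply Hin, Hc | exact E].
Qed.

Lemma differentiable_pt_lim_partials (F : R -> R -> R) x y :
  locally_2d (fun u v => ex_derive (fun t => F t v) u) x y ->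
  continuity_2d_pt (fun u v => Derive (fun t => F t v) u) x y ->
  ex_derive (fun t => F x t) y ->
  differentiable_pt_lim F x y (Derive (fun t => F t y) x) (Derive (fun t => F x t) y).
Proof.
  intros [d0 Hd0] Hcont Hy eps.
  assert (Hyl : derivable_pt_lim (fun t => F x t) y (Derive (fun t => F x t) y))
    by now apply is_derive_Reals, Derive_correct.
  set (Fx := Derive (fun t => F t y) x) in *. set (Fy := Derive (fun t => F x t) y) in *.
  assert (Heps := cond_pos eps).
  assert (He2 : 0 < eps / 2) by lra.
  destruct (Hcont (mkposreal _ He2)) as [d1 Hd1].
  destruct (derivable_pt_lim_linear_bound _ _ _ (mkposreal _ He2) Hyl) as [d2 Hd2].
  assert (Hd : 0 < Rmin d0 (Rmin d1 d2))
    by (apply Rmin_pos; [|apply Rmin_pos]; apply cond_pos).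
  exists (mkposreal _ Hd). intros u v Hu Hv. simpl in Hu, Hv, Hd1, Hd2.
  assert (Hm0 := Rmin_l d0 (Rmin d1 d2)).
  assert (Hm1 := Rmin_r d0 (Rmin d1 d2)).
  assert (Hm12 := conj (Rmin_l d1 d2) (Rmin_r d1 d2)).
  destruct (MVT_partial_fst F x u v) as (c & Hcx & Ec).
  { intros z Hz. apply Hd0; lra. }
  set (Dc := Derive (fun t => F t v) c) in *.
  assert (Hc : Rabs (Dc - Fx) < eps / 2) by (apply Hd1; lra).
  specialize (Hd2 v ltac:(lra)).
  replace (F u v - F x y - (Fx * (u - x) + Fy * (v - y))) with
    ((Dc - Fx) * (u - x) + (F x v - F x y - Fy * (v - y)))
    by (rewrite Rmult_minus_distr_r, <- Ec; ring).
  eapply Rle_trans; [apply Rabs_triang|]. rewrite Rabs_mult.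
  assert (Hux : Rabs (Dc - Fx) * Rabs (u - x) <= eps / 2 * Rabs (u - x))
    by (apply Rmult_le_compat_r; [apply Rabs_pos | lra]).
  assert (M1 := Rmult_le_compat_l _ _ _ (Rlt_le _ _ He2) (Rmax_l (Rabs (u - x)) (Rabs (v - y)))).
  assert (M2 := Rmult_le_compat_l _ _ _ (Rlt_le _ _ He2) (Rmax_r (Rabs (u - x)) (Rabs (v - y)))).
  lra.
Qed.

Lemma is_derive_seg O G x0 e t : open O -> smooth_on O G -> O (seg_pt x0 e t) ->
  is_derive (fun s => G (seg_pt x0 e s)) t
    (fst e * dx G (seg_pt x0 e t) + snd e * dy G (seg_pt x0 e t)).
Proof.
  intros HO HG Hq. set (q := seg_pt x0 e t) in *.
  assert (Hdiff : differentiable_pt_lim (fun a b => G (a, b)) (fst q) (snd q)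
                    (dx G q) (dy G q)).
  { apply differentiable_pt_lim_partials.
    - destruct (open_locally_2d O q HO Hq) as [d Hd]. exists d. intros a b Ha Hb.
      exact (proj1 (proj2 (HG nil (a, b) (Hd a b Ha Hb)))).
    - exact (continuity_2d_pt_smooth O (pdw [true] G) q (smooth_on_pdw O G _ HG) Hq).
    - exact (proj2 (proj2 (HG nil q Hq))). }
  assert (Hx : derivable_pt_lim (fun s => fst x0 + s * fst e) t (fst e))
    by (apply is_derive_Reals; auto_derive; [exact I | ring]).
  assert (Hy : derivable_pt_lim (fun s => snd x0 + s * snd e) t (snd e))
    by (apply is_derive_Reals; auto_derive; [exact I | ring]).
  apply is_derive_Reals. rewrite (Rmult_comm (fst e)), (Rmult_comm (snd e)).
  exact (derivable_pt_lim_comp_2d (fun a b => G (a, b)) (fun s => fst x0 + s * fst e)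
           (fun s => snd x0 + s * snd e) t _ _ _ _ Hdiff Hx Hy).
Qed.

Lemma is_derive_vanishing (phi : R -> R) h t l : 0 < h -> 0 <= t <= h ->
  (forall s, 0 <= s <= h -> phi s = 0) -> is_derive phi t l -> l = 0.
Proof.
  intros Hh Ht Hz Hd. apply is_derive_Reals in Hd.
  destruct (Req_dec l 0) as [E|E]; [exact E | exfalso].
  destruct (Hd (Rabs l) (Rabs_pos_lt _ E)) as [d Hdd].
  assert (Hd0 := cond_pos d).
  set (r := Rmin (d / 2) (h / 2)).
  assert (Hr : 0 < r) by (apply Rmin_pos; lra).
  assert (Hr1 : r <= d / 2) by apply Rmin_l.
  assert (Hr2 : r <= h / 2) by apply Rmin_r.
  (* step inside [0, h] from t, to whichever side has room *)
  set (s := if Rle_dec t (h / 2) then r else - r).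
  assert (Hs : 0 <= t + s <= h /\ s <> 0 /\ Rabs s < d).
  { unfold s; destruct Rle_dec; [rewrite Rabs_pos_eq | rewrite Rabs_Ropp, Rabs_pos_eq];
      repeat split; lra. }
  destruct Hs as (Hts & Hs0 & Hsd).
  specialize (Hdd s Hs0 Hsd). rewrite (Hz t), (Hz (t + s)) in Hdd by lra.
  replace ((0 - 0) / s - l) with (- l) in Hdd by (field; exact Hs0).
  rewrite Rabs_Ropp in Hdd. lra.
Qed.

(* [dirsum e k (fun w => pdw w f p)] is the k-th derivative (e1 dx + e2 dy)^k f (p)
   along e = (e1, e2), expanded over the words w of length k. *)
Fixpoint dirsum (e : R * R) (k : nat) (F : list bool -> R) : R :=
  match k with
  | O => F nil
  | S k => fst e * dirsum e k (fun w => F (true :: w))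
           + snd e * dirsum e k (fun w => F (false :: w))
  end.

Lemma dirsum_ext e k F G : (forall w, length w = k -> F w = G w) ->
  dirsum e k F = dirsum e k G.
Proof.
  revert F G. induction k as [|k IH]; intros F G HFG; simpl.
  - now apply HFG.
  - f_equal; f_equal; apply IH; intros w Hw; apply HFG; simpl; auto.
Qed.

Lemma dirsum_lincomb e k a b F G :
  dirsum e k (fun w => a * F w + b * G w) = a * dirsum e k F + b * dirsum e k G.
Proof.
  revert F G. induction k as [|k IH]; intros F G; simpl; [reflexivity|].
  rewrite (IH (fun w => F (true :: w))), (IH (fun w => F (false :: w))). ring.
Qed.

Lemma is_derive_dirsum e k t (Fam : list bool -> R -> R) (dF : list bool -> R) :
  (forall w, is_derive (Fam w) t (dF w)) ->
  is_derive (fun s => dirsum e k (fun w => Fam w s)) t (dirsum e k dF).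
Proof.
  revert Fam dF. induction k as [|k IH]; intros Fam dF HF; simpl; [apply HF|].
  apply (is_derive_plus (K := R_AbsRing) (V := R_NormedModule)
           (fun s => fst e * dirsum e k (fun w => Fam (true :: w) s))
           (fun s => snd e * dirsum e k (fun w => Fam (false :: w) s)));
    apply is_derive_scal, IH; intros w; apply HF.
Qed.

Lemma seg_pt_0 x0 e : seg_pt x0 e 0 = x0.
Proof. destruct x0; unfold seg_pt; simpl; f_equal; ring. Qed.

Lemma dirsum_pdw_seg_eq0 O Phi x0 e h : open O -> smooth_on O Phi -> 0 < h ->
  (forall t, 0 <= t <= h -> O (seg_pt x0 e t)) ->
  (forall t, 0 <= t <= h -> Phi (seg_pt x0 e t) = 0) ->
  forall k t, 0 <= t <= h -> dirsum e k (fun w => pdw w Phi (seg_pt x0 e t)) = 0.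
Proof.
  intros HO HPhi Hh Hseg HPhi0 k. induction k as [|k IH]; intros t Ht; simpl.
  - now apply HPhi0.
  - apply (is_derive_vanishing (fun s => dirsum e k (fun w => pdw w Phi (seg_pt x0 e s))) h t);
      [exact Hh | exact Ht | exact IH |].
    rewrite <- dirsum_lincomb.
    apply is_derive_dirsum. intros w.
    apply (is_derive_seg O); auto using smooth_on_pdw.
Qed.

Lemma Cpow_cos_sin th k :
  ((cos th, sin th) ^ k)%C = (cos (INR k * th), sin (INR k * th)).
Proof.
  induction k as [|k IH].
  - simpl. now rewrite Rmult_0_l, cos_0, sin_0.
  - rewrite Cpow_S, IH, S_INR.
    replace ((INR k + 1) * th) with (th + INR k * th) by ring.
    rewrite cos_plus, sin_plus. unfold Cmult; simpl. f_equal; ring.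
Qed.

Lemma Re_Ci_pow_mul (nu B : C) m :
  Re (Ci ^ m * (nu * B)) = fst nu * Re (Ci ^ m * B) + snd nu * Re (Ci ^ S m * B).
Proof.
  rewrite Cpow_S. destruct (Ci ^ m)%C as [x1 x2], nu as [n1 n2], B as [b1 b2].
  unfold Cmult, Ci; simpl. ring.
Qed.

Lemma dirsum_Re_Ci_pow (e : R * R) k (Z : C) :
  dirsum e k (fun w => Re (Ci ^ ydeg w * Z)) = Re (Z * e ^ k).
Proof.
  revert Z. induction k as [|k IH]; intros Z; cbn [dirsum].
  - cbn [Cpow]. now rewrite Cmult_1_l, Cmult_1_r.
  - rewrite (dirsum_ext e k _ (fun w => Re (Ci ^ ydeg w * Z))) by reflexivity.
    rewrite (dirsum_ext e k (fun w => Re (Ci ^ ydeg (false :: w) * Z))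
               (fun w => Re (Ci ^ ydeg w * (Ci * Z)))).
    + rewrite !IH, Cpow_S. destruct (e ^ k)%C as [p1 p2], Z as [z1 z2], e as [e1 e2].
      unfold Cmult, Ci; simpl. ring.
    + intros w _. rewrite count_occ_cons_eq by reflexivity. cbn [Cpow].
      f_equal. ring.
Qed.

Lemma Im_mul_eq0_of_normal (e nu z : C) :
  fst e ^ 2 + snd e ^ 2 = 1 -> fst nu ^ 2 + snd nu ^ 2 = 1 ->
  fst nu * fst e + snd nu * snd e = 0 ->
  Re (nu * z) = 0 -> Im (e * z) = 0.
Proof.
  destruct e as [e1 e2], nu as [n1 n2], z as [z1 z2]; unfold Cmult, Re, Im; cbn [fst snd].
  intros He Hn Hne Hre.
  (* a unit normal to e is s i e with s = det(e, nu) = +-1 *)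
  set (s := n2 * e1 - n1 * e2).
  assert (Hn1 : n1 = - s * e2).
  { transitivity (n1 * (e1 ^ 2 + e2 ^ 2)); [rewrite He; ring|].
    replace (n1 * (e1 ^ 2 + e2 ^ 2)) with (e1 * (n1 * e1 + n2 * e2) - s * e2)
      by (unfold s; ring). rewrite Hne. ring. }
  assert (Hn2 : n2 = s * e1).
  { transitivity (n2 * (e1 ^ 2 + e2 ^ 2)); [rewrite He; ring|].
    replace (n2 * (e1 ^ 2 + e2 ^ 2)) with (e2 * (n1 * e1 + n2 * e2) + s * e1)
      by (unfold s; ring). rewrite Hne. ring. }
  assert (Hs : s * s = 1).
  { replace (s * s) with ((n1 ^ 2 + n2 ^ 2) * (e1 ^ 2 + e2 ^ 2) - (n1 * e1 + n2 * e2) ^ 2)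
      by (unfold s; ring). rewrite He, Hn, Hne. ring. }
  rewrite Hn1, Hn2 in Hre.
  replace (e1 * z2 + e2 * z1) with (- s * (- s * e2 * z1 - s * e1 * z2))
    by (transitivity (s * s * (e1 * z2 + e2 * z1)); [ring | rewrite Hs; ring]).
  rewrite Hre. ring.
Qed.

Lemma Cmult_rot_Im_eq0 (z : C) phi :
  Im z = 0 -> Im (z * (cos phi, sin phi)) = 0 -> sin phi <> 0 -> z = 0%C.
Proof.
  destruct z as [a b]; unfold Cmult; simpl. intros -> Hrot Hsin.
  assert (Ha : a * sin phi = 0) by lra.
  apply Rmult_integral in Ha as [-> | ?]; [reflexivity | contradiction].
Qed.

Lemma sin_INR_mul_PI_neq0 alpha N : 0 < alpha < 1 -> (1 <= N)%nat ->
  (forall q : nat, (1 <= q < N)%nat -> alpha <> INR q / INR N) ->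
  sin (INR N * (alpha * PI)) <> 0.
Proof.
  intros Ha HN Hq Hs. apply sin_eq_0_0 in Hs as [k Hk].
  assert (HPI := PI_RGT_0).
  assert (HN0 : 0 < INR N) by (apply lt_0_INR; lia).
  assert (Hk2 : INR N * alpha = IZR k)
    by (apply Rmult_eq_reg_r with PI; [rewrite <- Hk; ring | lra]).
  assert (Hk0 : (0 < k)%Z) by (apply lt_0_IZR; rewrite <- Hk2; nra).
  assert (HkN : IZR k < INR N) by (rewrite <- Hk2; nra).
  apply (Hq (Z.to_nat k)).
  - split; [lia|]. apply INR_lt. rewrite INR_IZR_INZ, Z2Nat.id by lia. exact HkN.
  - rewrite INR_IZR_INZ, Z2Nat.id, <- Hk2 by lia. field. lra.
Qed.

Lemma pdw_lap_eq0 O lam F x0 w : open O -> smooth_on O F -> O x0 ->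
  (forall q, O q -> - lap F q = lam * F q) -> pdw w F x0 = 0 ->
  pdw (w ++ [true; true]) F x0 + pdw (w ++ [false; false]) F x0 = 0.
Proof.
  intros HO HF Hx0 Hlap Hw.
  rewrite !pdw_app, <- (pdw_plus O) by auto using smooth_on_pdw.
  rewrite (pdw_ext_open O _ (fun q => - lam * F q) HO); [| | exact Hx0].
  - now rewrite pdw_scal, Hw, Rmult_0_r.
  - intros q Hq. specialize (Hlap q Hq). unfold lap in Hlap. simpl. lra.
Qed.

(* Up to the factor N!, [Re (Ci ^ ydeg w * B)] are the order-N derivatives of the
   harmonic polynomial Re (B (x + i y) ^ N). *)
Lemma harmonic_jet O lam F x0 N : open O -> smooth_on O F -> O x0 ->
  (forall q, O q -> - lap F q = lam * F q) ->
  (forall w, (length w < N)%nat -> pdw w F x0 = 0) ->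
  exists B : C, forall w, length w = N -> pdw w F x0 = Re (Ci ^ ydeg w * B).
Proof.
  intros HO HF Hx0 Hlap Hlow.
  set (c a b := pdw (repeat true a ++ repeat false b) F x0).
  assert (Hsort : forall w, pdw w F x0 = c (xdeg w) (ydeg w))
    by (intros w; exact (pdw_Permutation O F _ _ HO HF (Permutation_sort_bool w) x0 Hx0)).
  assert (Hc2 : forall a b, (a + b + 2 = N)%nat -> c a (b + 2)%nat = - c (a + 2)%nat b).
  { intros a b Hab.
    set (w := repeat true a ++ repeat false b).
    assert (Hw : (length w < N)%nat) by (unfold w; rewrite length_app, !repeat_length; lia).
    assert (E := pdw_lap_eq0 O lam F x0 w HO HF Hx0 Hlap (Hlow w Hw)). unfold w in E.
    rewrite <- !app_assoc, (pdw_Permutation O F _ (repeat true (a + 2) ++ repeat false b)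
                              HO HF) in E; [| | exact Hx0].
    - unfold c. rewrite repeat_app. simpl. lra.
    - rewrite repeat_app, <- app_assoc. apply Permutation_app_head, Permutation_app_comm. }
  set (B := (c N 0%nat, - c (N - 1)%nat 1%nat) : C).
  exists B.
  assert (Hc : forall b a, (a + b = N)%nat -> c a b = Re (Ci ^ b * B)).
  { induction b as [b IH] using lt_wf_ind; intros a Hab. destruct b as [|[|b]].
    - replace a with N by lia. unfold B, Cmult, Re; simpl. ring.
    - replace a with (N - 1)%nat by lia. unfold B, Cmult, Re; simpl. ring.
    - replace (S (S b)) with (b + 2)%nat by lia.
      rewrite Hc2, (IH b) by lia. replace (b + 2)%nat with (S (S b)) by lia.
      cbn [Cpow]. destruct (Ci ^ b)%C, B. unfold Cmult, Ci, Re; simpl. ring. }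
  intros w Hw. rewrite Hsort. apply Hc.
  rewrite <- Hw, (Permutation_length (Permutation_sort_bool w)), length_app, !repeat_length.
  reflexivity.
Qed.

(* With F = Re u, G = Im u, a = Re eta and b = - Im eta this is the real part of
   d_nu u + eta u; its imaginary part is [robin nu (Re eta) (Im eta) (Im u) (Re u)]. *)
Definition robin (nu : R * R) (a b : R) (F G : R * R -> R) : R * R -> R :=
  fun p => fst nu * dx F p + snd nu * dy F p + (a * F p + b * G p).

Lemma gen_singular_line_robin u x0 e h eta : gen_singular_line u x0 e h eta ->
  exists nu, fst nu ^ 2 + snd nu ^ 2 = 1 /\ fst nu * fst e + snd nu * snd e = 0 /\
    (forall t, 0 <= t <= h ->
       robin nu (Re eta) (- Im eta) (ReF u) (ImF u) (seg_pt x0 e t) = 0) /\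
    (forall t, 0 <= t <= h ->
       robin nu (Re eta) (Im eta) (ImF u) (ReF u) (seg_pt x0 e t) = 0).
Proof.
  intros [_ (nu & Hnu & Hperp & Hline)]. exists nu.
  repeat split; [exact Hnu | exact Hperp | |]; intros t Ht; specialize (Hline t Ht);
    [apply (f_equal fst) in Hline | apply (f_equal snd) in Hline];
    unfold robin, dnu, ReF, ImF, Cplus, Cmult, Re, Im in *; simpl in *; lra.
Qed.

Section Corner.

Variables (O : R * R -> Prop) (x0 : R * R) (h : R) (F G : R * R -> R).
Hypotheses (HO : open O) (HF : smooth_on O F) (HG : smooth_on O G) (Hh : 0 < h).

Lemma smooth_on_robin nu a b : smooth_on O (robin nu a b F G).
Proof.
  assert (HFx : smooth_on O (dx F)) by exact (smooth_on_pdw O F [true] HF).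
  assert (HFy : smooth_on O (dy F)) by exact (smooth_on_pdw O F [false] HF).
  unfold robin. repeat apply smooth_on_plus; try apply smooth_on_scal; assumption.
Qed.

Lemma pdw_robin nu a b w p : O p ->
  pdw w (robin nu a b F G) p = fst nu * pdw (w ++ [true]) F p
    + snd nu * pdw (w ++ [false]) F p + (a * pdw w F p + b * pdw w G p).
Proof.
  intros Hp. assert (HFx : smooth_on O (dx F)) by exact (smooth_on_pdw O F [true] HF).
  assert (HFy : smooth_on O (dy F)) by exact (smooth_on_pdw O F [false] HF).
  unfold robin.
  rewrite !(pdw_plus O), !pdw_scal, !pdw_app; [reflexivity|..];
    repeat apply smooth_on_plus; try apply smooth_on_scal; assumption.
Qed.

Lemma ray_Im_eq0 N (B : C) e nu a b : (1 <= N)%nat ->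
  fst e ^ 2 + snd e ^ 2 = 1 -> fst nu ^ 2 + snd nu ^ 2 = 1 ->
  fst nu * fst e + snd nu * snd e = 0 ->
  (forall t, 0 <= t <= h -> O (seg_pt x0 e t)) ->
  (forall t, 0 <= t <= h -> robin nu a b F G (seg_pt x0 e t) = 0) ->
  (forall w, (length w < N)%nat -> pdw w F x0 = 0 /\ pdw w G x0 = 0) ->
  (forall w, length w = N -> pdw w F x0 = Re (Ci ^ ydeg w * B)) ->
  Im (B * e ^ N) = 0.
Proof.
  intros HN He Hnu Hperp Hseg Hrobin Hlow HB.
  assert (Hx0 : O x0) by (rewrite <- (seg_pt_0 x0 e); apply Hseg; lra).
  assert (H0 := dirsum_pdw_seg_eq0 O _ x0 e h HO (smooth_on_robin nu a b) Hh Hseg Hrobin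
                  (N - 1) 0 ltac:(lra)).
  rewrite seg_pt_0, (dirsum_ext e (N - 1) _ (fun w => Re (Ci ^ ydeg w * (nu * B)))),
    dirsum_Re_Ci_pow, <- Cmult_assoc in H0.
  - apply (Im_mul_eq0_of_normal e nu) in H0; [|assumption..].
    replace N with (S (N - 1)) by lia. rewrite Cpow_S.
    replace (B * (e * e ^ (N - 1)))%C with (e * (B * e ^ (N - 1)))%C by ring.
    exact H0.
  - intros w Hw.
    rewrite pdw_robin, (proj1 (Hlow w ltac:(lia))), (proj2 (Hlow w ltac:(lia))), !HB
      by (try rewrite length_app; simpl; lia || assumption).
    rewrite !count_occ_app, Re_Ci_pow_mul.
    change (count_occ Bool.bool_dec [true] false) with 0%nat.
    change (count_occ Bool.bool_dec [false] false) with 1%nat.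
    rewrite Nat.add_0_r, Nat.add_1_r. ring.
Qed.

Lemma jet_step lam N th em ep num nup am bm ap bp :
  (forall q, O q -> - lap F q = lam * F q) -> (1 <= N)%nat ->
  (forall w, (length w < N)%nat -> pdw w F x0 = 0 /\ pdw w G x0 = 0) ->
  fst em ^ 2 + snd em ^ 2 = 1 ->
  ep = (cos th * fst em - sin th * snd em, sin th * fst em + cos th * snd em) ->
  sin (INR N * th) <> 0 ->
  fst num ^ 2 + snd num ^ 2 = 1 -> fst num * fst em + snd num * snd em = 0 ->
  fst nup ^ 2 + snd nup ^ 2 = 1 -> fst nup * fst ep + snd nup * snd ep = 0 ->
  (forall t, 0 <= t <= h -> O (seg_pt x0 em t)) ->
  (forall t, 0 <= t <= h -> O (seg_pt x0 ep t)) ->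
  (forall t, 0 <= t <= h -> robin num am bm F G (seg_pt x0 em t) = 0) ->
  (forall t, 0 <= t <= h -> robin nup ap bp F G (seg_pt x0 ep t) = 0) ->
  forall w, length w = N -> pdw w F x0 = 0.
Proof.
  intros Hlap HN Hlow Hem Hep Hsin Hnum Hperm Hnup Hperp Hsm Hsp Hrm Hrp.
  assert (Hx0 : O x0) by (rewrite <- (seg_pt_0 x0 em); apply Hsm; lra).
  destruct (harmonic_jet O lam F x0 N HO HF Hx0 Hlap (fun w Hw => proj1 (Hlow w Hw)))
    as [B HB].
  assert (Hrot : ep = ((cos th, sin th) * em)%C)
    by (rewrite Hep; unfold Cmult; simpl; f_equal; ring).
  assert (Hep1 : fst ep ^ 2 + snd ep ^ 2 = 1).
  { assert (Htrig := sin2_cos2 th). unfold Rsqr in Htrig. rewrite Hep. simpl.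
    transitivity ((sin th * sin th + cos th * cos th) * (fst em ^ 2 + snd em ^ 2));
      [ring | rewrite Htrig, Hem; ring]. }
  assert (Hm := ray_Im_eq0 N B em num am bm HN Hem Hnum Hperm Hsm Hrm Hlow HB).
  assert (Hp := ray_Im_eq0 N B ep nup ap bp HN Hep1 Hnup Hperp Hsp Hrp Hlow HB).
  rewrite Hrot, Cpow_mult_l, Cpow_cos_sin in Hp.
  replace (B * ((cos (INR N * th), sin (INR N * th)) * em ^ N))%C
    with (B * em ^ N * (cos (INR N * th), sin (INR N * th)))%C in Hp by ring.
  assert (HB0 : B = 0%C).
  { destruct (Ceq_dec B 0) as [|HB0]; [assumption|exfalso].
    assert (Hem0 : em <> RtoC 0) by (intros ->; simpl in Hem; lra).
    apply (Cmult_neq_0 B (em ^ N) HB0 (Cpow_nz em N Hem0)).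
    exact (Cmult_rot_Im_eq0 _ _ Hm Hp Hsin). }
  intros w Hw. now rewrite HB, HB0, Cmult_0_r.
Qed.

End Corner.

Theorem theorem3p1
  (Omega : R * R -> Prop) (lam : R) (u : R * R -> C)
  (x0 em ep : R * R) (h alpha : R) (C1 C2 : C) (n : nat) :
  open Omega ->
  0 < lam ->
  smooth_on Omega (ReF u) -> smooth_on Omega (ImF u) ->
  helmholtz Omega lam u ->
  Omega x0 ->
  0 < h ->
  0 < alpha < 1 ->
  fst em ^ 2 + snd em ^ 2 = 1 ->
  (* e^+ is e^- rotated counterclockwise by alpha * PI *)
  ep = (cos (alpha * PI) * fst em - sin (alpha * PI) * snd em,
        sin (alpha * PI) * fst em + cos (alpha * PI) * snd em) ->
  (forall t, 0 <= t <= h -> Omega (seg_pt x0 em t)) ->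
  (forall t, 0 <= t <= h -> Omega (seg_pt x0 ep t)) ->
  gen_singular_line u x0 em h C1 ->
  gen_singular_line u x0 ep h C2 ->
  (3 <= n)%nat ->
  u x0 = RtoC 0 ->
  (forall p q : nat, (1 <= q)%nat -> (q < p)%nat -> (p <= n - 1)%nat ->
     alpha <> INR q / INR p) ->
  forall w : list bool, (length w <= n - 1)%nat ->
    pdw w (ReF u) x0 = 0 /\ pdw w (ImF u) x0 = 0.
Proof.
  intros HO _ Hf Hg Hh _ Hh0 Ha Hem Hep Hsm Hsp Hm Hp _ Hu0 Hq.
  destruct (gen_singular_line_robin _ _ _ _ _ Hm) as (num & Hnum & Hperm & Hrm & Hrm').
  destruct (gen_singular_line_robin _ _ _ _ _ Hp) as (nup & Hnup & Hperp & Hrp & Hrp').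
  assert (HhF : forall q, Omega q -> - lap (ReF u) q = lam * ReF u q) by apply Hh.
  assert (HhG : forall q, Omega q -> - lap (ImF u) q = lam * ImF u q) by apply Hh.
  assert (Hjet : forall N w, (N <= n - 1)%nat -> length w = N ->
                   pdw w (ReF u) x0 = 0 /\ pdw w (ImF u) x0 = 0).
  { intros N. induction N as [N IH] using lt_wf_ind. intros w HN Hw.
    destruct (Nat.eq_dec N 0) as [->|HN0].
    - apply length_zero_iff_nil in Hw as ->. unfold ReF, ImF. simpl. now rewrite Hu0.
    - assert (Hlow : forall v, (length v < N)%nat ->
                       pdw v (ReF u) x0 = 0 /\ pdw v (ImF u) x0 = 0)
        by (intros v Hv; apply (IH (length v)); lia).
      assert (Hlow' : forall v, (length v < N)%nat ->
                        pdw v (ImF u) x0 = 0 /\ pdw v (ReF u) x0 = 0)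
        by (intros v Hv; apply and_comm, Hlow, Hv).
      assert (Hsin : sin (INR N * (alpha * PI)) <> 0)
        by (apply sin_INR_mul_PI_neq0; [exact Ha | lia | intros q Hqn; apply Hq; lia]).
      split.
      + eapply (jet_step Omega x0 h (ReF u) (ImF u) HO Hf Hg Hh0 lam N _ em ep num nup);
          eauto; lia.
      + eapply (jet_step Omega x0 h (ImF u) (ReF u) HO Hg Hf Hh0 lam N _ em ep num nup);
          eauto; lia. }
  intros w Hw. exact (Hjet _ w Hw eq_refl).
Qed.
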